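(* There exist two tree-child phylogenetic networks $N_{11}$ and $N_{12}$ on $S=\{1,2,3,4,5\}$ such that $N_{11}\not\cong N_{12}$, $\theta_{AB}(N_{11})=\theta_{AB}(N_{12})$, $\Psi(N_{11})=\Psi(N_{12})$, and the set of reticulation scenarios $\{RS(v)\}$ of hybrid nodes is the same in both.
   Context: A DAG $N=(V,E)$ is labeled in a finite set $S$ if its leaves (out-degree 0) are bijectively labeled by $S$; leaves are identified with their labels. A tree node has in-degree at most 1; a hybrid node has in-degree greater than 1. Isomorphism ($\cong$) means isomorphism of directed graphs preserving leaf labels. A tree child of a node is a child that is a tree node. A tree-child phylogenetic network on $S$ is a rooted DAG labeled in $S$ in which every non-leaf node has at least one tree child, no tree node has out-degree 1, and every hybrid node has out-degree exactly 1. For a node $u$: $C(u)$ is the set of leaves descending from $u$; $A(u)$ the set of leaves $s$ such that every path from the root to $s$ contains $u$; $B(u)=C(u)\setminus A(u)$. For an arc $e=(u,v)$: $\theta(e)=(A(v),B(v),S\setminus C(v))$; $\theta_{AB}(e)$ is that triple with each leaf $s\in A(v)\cup B(v)$ weighted by the maximum number of hybrid nodes on a path from $v$ to $s$ (including $v,s$); $\theta_{AB}(N)=\{\theta_{AB}(e)\mid e\in E\}$. An arc is a tree arc if its head is a tree node and a network arc otherwise. $RS(v)=\{C(u)\mid u$ a parent of $v\}$ for a hybrid node $v$. $\Psi(e)=\theta_{AB}(e)$ for a tree arc and $\Psi(e)=(\theta(e),RS(v))$ for a network arc with head $v$; $\Psi(N)=\{\Psi(e)\mid e\in E\}$. *)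

From mathcomp Require Import all_boot.
Set Implicit Arguments. Unset Strict Implicit. Unset Printing Implicit Defensive.

(* A DAG with nodes of a finite type, arcs given by a (simple) relation, and a
   labelling function; only the labels of leaves matter. *)
Record net := Net { nV : finType; arc : rel nV; lab : nV -> nat }.

Section Defs.
Variable N : net.
Local Notation V := (nV N).
Local Notation E := (@arc N).

Definition inS (s : nat) : Prop := 1 <= s <= 5.

Definition indeg (v : V) : nat := #|[set u | E u v]|.
Definition outdeg (v : V) : nat := #|[set w | E v w]|.
Definition leaf (v : V) : bool := outdeg v == 0.
Definition tree_node (v : V) : bool := indeg v <= 1.
Definition hybrid (v : V) : bool := 1 < indeg v.

Definition is_root (r : V) : bool := (indeg r == 0) && [forall v, connect E r v].
Definition acyclic : Prop := forall u v, E u v -> ~~ connect E v u.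
Definition rooted_dag : Prop := acyclic /\ exists r, is_root r.

Definition labeled_in_S : Prop :=
  [/\ (forall x y, leaf x -> leaf y -> lab x = lab y -> x = y),
      (forall x, leaf x -> inS (lab x)) &
      (forall s, inS s -> exists x, leaf x /\ lab x = s)].

Definition tree_child_network : Prop :=
  [/\ rooted_dag, labeled_in_S,
      (forall v, ~~ leaf v -> exists w, E v w /\ tree_node w),
      (forall v, tree_node v -> outdeg v != 1) &
      (forall v, hybrid v -> outdeg v = 1)].

Definition Cset (u : V) (s : nat) : Prop :=
  exists x, [/\ leaf x, lab x = s & connect E u x].

Definition Aset (u : V) (s : nat) : Prop :=
  (exists x, leaf x /\ lab x = s) /\
  forall (r x : V) (p : seq V), is_root r -> leaf x -> lab x = s ->
    path E r p -> last r p = x -> u \in r :: p.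

Definition Bset (u : V) (s : nat) : Prop := Cset u s /\ ~ Aset u s.

Definition Cco (u : V) (s : nat) : Prop := inS s /\ ~ Cset u s.

Definition maxhyb (v : V) (s : nat) (n : nat) : Prop :=
  exists x, [/\ leaf x, lab x = s,
    (exists p, [/\ path E v p, last v p = x & count hybrid (v :: p) = n]) &
    (forall p, path E v p -> last v p = x -> count hybrid (v :: p) <= n)].

Definition parent (u v : V) : bool := E u v.
End Defs.

Definition same_set (P Q : nat -> Prop) : Prop := forall s, P s <-> Q s.

(* theta(e) for arcs with heads v1 (in N1) and v2 (in N2) coincide *)
Definition theta_eq (N1 N2 : net) (v1 : nV N1) (v2 : nV N2) : Prop :=
  [/\ same_set (Aset v1) (Aset v2), same_set (Bset v1) (Bset v2) &
      same_set (Cco v1) (Cco v2)].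

Definition thetaAB_eq (N1 N2 : net) (v1 : nV N1) (v2 : nV N2) : Prop :=
  theta_eq v1 v2 /\
  forall s, (Aset v1 s \/ Bset v1 s) -> forall n, maxhyb v1 s n <-> maxhyb v2 s n.

Definition RS_eq (N1 N2 : net) (v1 : nV N1) (v2 : nV N2) : Prop :=
  (forall u1 : nV N1, arc u1 v1 -> exists u2 : nV N2, arc u2 v2 /\ same_set (Cset u1) (Cset u2)) /\
  (forall u2 : nV N2, arc u2 v2 -> exists u1 : nV N1, arc u1 v1 /\ same_set (Cset u1) (Cset u2)).

(* Psi(e1) = Psi(e2): both tree arcs with equal theta_AB, or both network arcs
   with equal (theta, RS(head)) *)
Definition Psi_eq (N1 N2 : net) (v1 : nV N1) (v2 : nV N2) : Prop :=
  [/\ tree_node v1, tree_node v2 & thetaAB_eq v1 v2] \/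
  [/\ hybrid v1, hybrid v2, theta_eq v1 v2 & RS_eq v1 v2].

Definition thetaAB_net_eq (N1 N2 : net) : Prop :=
  (forall u1 v1 : nV N1, arc u1 v1 -> exists u2 v2 : nV N2, arc u2 v2 /\ thetaAB_eq v1 v2) /\
  (forall u2 v2 : nV N2, arc u2 v2 -> exists u1 v1 : nV N1, arc u1 v1 /\ thetaAB_eq v2 v1).

Definition Psi_net_eq (N1 N2 : net) : Prop :=
  (forall u1 v1 : nV N1, arc u1 v1 -> exists u2 v2 : nV N2, arc u2 v2 /\ Psi_eq v1 v2) /\
  (forall u2 v2 : nV N2, arc u2 v2 -> exists u1 v1 : nV N1, arc u1 v1 /\ Psi_eq v2 v1).

Definition RS_net_eq (N1 N2 : net) : Prop :=
  (forall v1 : nV N1, hybrid v1 -> exists v2 : nV N2, hybrid v2 /\ RS_eq v1 v2) /\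
  (forall v2 : nV N2, hybrid v2 -> exists v1 : nV N1, hybrid v1 /\ RS_eq v1 v2).

Definition isomorphic (N1 N2 : net) : Prop :=
  exists f : nV N1 -> nV N2, [/\ bijective f,
    (forall u w, arc (f u) (f w) = arc u w) &
    (forall x, leaf x -> lab (f x) = lab x)].

From Pilot Require Import Defs.
From mathcomp Require Import all_boot.
Set Implicit Arguments. Unset Strict Implicit. Unset Printing Implicit Defensive.

(* Every notion in the
   statement is decidable once the nodes are enumerated: clusters and the A-sets by
   reachability (u lies on every root-to-x path iff x is unreachable from the root once
   u is removed), the hybrid weights by listing all paths, of which there are finitely
   many because a path in a DAG visits each node at most once.  Each of the three
   equalities then reduces to comparing finite signatures of the arc heads (of the
   hybrid nodes for RS), which is done by evaluation.  The networks are not isomorphic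
   because the leaf labelled 2 is at depth 3 in N11 but not in N12. *)

(* Cardinals, hence [connect], do not reduce under [vm_compute] ([card] is sealed), so the
   decision procedures below run over an explicit list [nodes] enumerating the type. *)
Section Enumeration.
Variables (T : finType) (nodes : seq T).
Hypothesis nodesP : Finite.axiom nodes.

Lemma mem_nodes x : x \in nodes.
Proof. by rewrite -has_pred1 has_count nodesP. Qed.

Lemma nodes_uniq : uniq nodes.
Proof. by apply: count_mem_uniq => x; rewrite nodesP mem_nodes. Qed.

Lemma card_nodes : #|T| = size nodes.
Proof. by rewrite -(card_uniqP nodes_uniq); apply: eq_card => x; rewrite mem_nodes. Qed.

Lemma card_set_count (P : pred T) : #|[set x | P x]| = count P nodes.
Proof.
rewrite -size_filter -(card_uniqP (filter_uniq P nodes_uniq)).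
by apply: eq_card => x; rewrite inE mem_filter mem_nodes andbT.
Qed.

Definition reach (e : rel T) (x : T) : seq T :=
  dfs (fun z => filter (e z) nodes) (size nodes) [::] x.

Lemma mem_reach e x y : (y \in reach e x) = connect e x y.
Proof.
have grelE : grel (fun z => filter (e z) nodes) =2 e.
  by move=> a b; rewrite /= mem_filter mem_nodes andbT.
apply/(dfs_pathP _ _ _ _)/connectP; rewrite ?card0 ?card_nodes ?in_nil //.
- by case=> p; rewrite (eq_path grelE) => p_path ->; exists p.
- case=> p p_path ->; exists p; rewrite ?(eq_path grelE) //.
  by rewrite disjoint_sym disjoint0.
Qed.

Fixpoint paths (e : rel T) (n : nat) (x : T) : seq (seq T) :=
  if n is n'.+1 then [::] :: [seq y :: p | y <- filter (e x) nodes, p <- paths e n' y]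
  else [:: [::]].

Lemma mem_paths e n x p : (p \in paths e n x) = path e x p && (size p <= n).
Proof.
elim: n x p => [|n IHn] x [|y p] //=; rewrite in_cons /= ?andbF //.
apply/flatten_mapP/idP => [[z ez /mapP [q qz [-> ->]]]|/andP [/andP [exy py] sp]].
  by move: ez qz; rewrite mem_filter IHn => /andP [-> _] /andP [-> ?].
by exists y; rewrite ?mem_filter ?exy ?mem_nodes // map_f // IHn py.
Qed.

End Enumeration.

(* [ord_enum n] is stuck under [vm_compute] (it goes through [insub], i.e. the opaque
   [idP]); this enumeration only uses [lift], whose proof component is never inspected. *)
Fixpoint ord_seq n : seq 'I_n :=
  if n is n'.+1 then ord0 :: map (lift ord0) (ord_seq n') else [::].

Lemma ord_seqP n : Finite.axiom (ord_seq n).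
Proof.
apply: Finite.uniq_enumP.
  elim: n => //= n IHn; rewrite map_inj_uniq ?IHn ?andbT; last exact: lift_inj.
  by apply/mapP => -[i _ /eqP]; rewrite (negbTE (neq_lift _ _)).
elim: n => [[]|n IHn x] //.
by case: (unliftP ord0 x) => [j ->|->]; rewrite /= ?mem_head // in_cons map_f ?orbT.
Qed.

Lemma foldr_maxn_ub (s : seq nat) k : k \in s -> k <= foldr maxn 0 s.
Proof.
elim: s => //= a s IHs; rewrite in_cons => /orP [/eqP ->|/IHs]; first exact: leq_maxl.
by move/leq_trans; apply; exact: leq_maxr.
Qed.

Lemma foldr_maxn_mem (s : seq nat) : 0 < foldr maxn 0 s -> foldr maxn 0 s \in s.
Proof.
elim: s => //= a s IHs; case: (leqP a (foldr maxn 0 s)) => _; last by rewrite mem_head.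
by move=> /IHs; rewrite in_cons orbC => ->.
Qed.

Definition labels : seq nat := iota 1 5.

Lemma inS_labels s : inS s <-> s \in labels.
Proof. by rewrite mem_iota. Qed.

(** * Decision procedures for the notions of the statement *)

Section Decide.
Variables (N : net) (nodes : seq (nV N)).
Hypothesis nodesP : Finite.axiom nodes.
Local Notation V := (nV N).
Local Notation E := (@Defs.arc N).
Local Notation reach := (reach nodes).
Local Notation mem_reach := (mem_reach nodesP).
Local Notation mem_nodes := (mem_nodes nodesP).

Definition indegb (v : V) : nat := count (E^~ v) nodes.
Definition outdegb (v : V) : nat := count (E v) nodes.
Definition leafb (x : V) : bool := outdegb x == 0.
Definition hybridb (v : V) : bool := 1 < indegb v.
Definition tree_nodeb (v : V) : bool := indegb v <= 1.

Lemma indegbE v : indegb v = indeg v.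
Proof. by rewrite /indeg (card_set_count nodesP). Qed.

Lemma outdegbE v : outdegb v = outdeg v.
Proof. by rewrite /outdeg (card_set_count nodesP). Qed.

Lemma leafbE x : leafb x = leaf x.
Proof. by rewrite /leafb outdegbE. Qed.

Lemma hybridbE v : hybridb v = hybrid v.
Proof. by rewrite /hybridb indegbE. Qed.

Lemma tree_nodebE v : tree_nodeb v = tree_node v.
Proof. by rewrite /tree_nodeb indegbE. Qed.

Lemma hybridbN v : hybridb v = ~~ tree_nodeb v.
Proof. by rewrite /hybridb /tree_nodeb ltnNge. Qed.

Definition is_rootb (r : V) : bool := (indegb r == 0) && all (mem (reach E r)) nodes.

Lemma is_rootbE r : is_rootb r = is_root r.
Proof.
rewrite /is_rootb /is_root indegbE; congr andb.
apply/allP/forallP => [H v|H v _]; last by rewrite inE mem_reach.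
by rewrite -mem_reach; exact: H (mem_nodes v).
Qed.

Definition leaf_labelled (s : nat) (x : V) : bool := leafb x && (lab x == s).

Definition Cb (u : V) (s : nat) : bool := has (leaf_labelled s) (reach E u).

Lemma CsetP u s : Cset u s <-> Cb u s.
Proof.
split => [[x [lx ls ux]]|/hasP [x ux /andP [lx /eqP ls]]].
  by apply/hasP; exists x; rewrite ?mem_reach // /leaf_labelled leafbE lx ls eqxx.
by exists x; rewrite -leafbE -mem_reach.
Qed.

Definition avoid (u : V) : rel V := [rel a b | E a b && (b != u)].

Lemma path_avoid u r p : path (avoid u) r p = path E r p && (u \notin p).
Proof.
elim: p r => [|w p IHp] r //=; rewrite IHp in_cons negb_or (eq_sym u w).
by rewrite /= -!andbA; do !bool_congr.
Qed.

Definition Ab (u : V) (s : nat) : bool :=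
  has (leaf_labelled s) nodes &&
  all (fun r => is_rootb r ==> (u == r) || ~~ has (leaf_labelled s) (reach (avoid u) r)) nodes.

Lemma AsetP u s : Aset u s <-> Ab u s.
Proof.
split.
- move=> [[x [lx ls]] Hu]; rewrite /Ab; apply/andP; split.
    by apply/hasP; exists x; rewrite ?mem_nodes // /leaf_labelled leafbE lx ls eqxx.
  apply/allP => r _; apply/implyP; rewrite is_rootbE => Hr.
  case: eqP => //= ur; apply/hasP => -[y]; rewrite mem_reach => /connectP [p].
  rewrite path_avoid /leaf_labelled leafbE => /andP [pp up] yp /andP [ly /eqP lys].
  by move: (Hu r y p Hr ly lys pp (esym yp)); rewrite in_cons (negbTE up) orbF => /eqP.
- rewrite /Ab => /andP [/hasP [x _ /andP [lx /eqP ls]] /allP Hu].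
  split; first by exists x; rewrite -leafbE.
  move=> r y p Hr ly lys pp yp; apply/negPn/negP; rewrite in_cons negb_or => /andP [ur up].
  move/implyP: (Hu r (mem_nodes r)); rewrite is_rootbE (negbTE ur) => /(_ Hr) /hasP; apply.
  exists y; last by rewrite /leaf_labelled leafbE ly lys eqxx.
  by rewrite mem_reach; apply/connectP; exists p; rewrite ?path_avoid ?pp.
Qed.

Definition Bb (u : V) (s : nat) : bool := Cb u s && ~~ Ab u s.

Lemma BsetP u s : Bset u s <-> Bb u s.
Proof.
rewrite /Bset /Bb; split => [[/CsetP -> Na]|/andP [/CsetP Cu /negP Na]].
  by apply/negP => /AsetP.
by split => // /AsetP.
Qed.

Lemma CcoP u s : Cco u s <-> (s \in labels) && ~~ Cb u s.
Proof.
rewrite /Cco; split => [[/inS_labels -> Nc]|/andP [/inS_labels Sl /negP Nc]].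
  by apply/negP => /CsetP.
by split => // /CsetP.
Qed.

Definition rank (v : V) : nat := #|[set w | connect E v w]|.

Hypothesis Nacyclic : acyclic N.

Lemma rank_arc a b : E a b -> rank b < rank a.
Proof.
move=> ab; apply: proper_card; apply/properP; split.
  by apply/subsetP => w; rewrite !inE; exact: connect_trans (connect1 ab).
by exists a; rewrite !inE ?connect0 //; exact: Nacyclic.
Qed.

Lemma path_size_rank v p : path E v p -> size p < rank v.
Proof.
elim: p v => [|w p IHp] v /=.
  by rewrite card_gt0 => _; apply/set0Pn; exists v; rewrite inE connect0.
by case/andP => vw /IHp; move/leq_ltn_trans; apply; exact: rank_arc.
Qed.

Lemma path_size_lt v p : path E v p -> size p < #|V|.
Proof. by move/path_size_rank/leq_trans; apply; exact: max_card. Qed.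

Definition hyb_counts (v x : V) : seq nat :=
  [seq (count hybridb (v :: p)).+1 | p <- paths nodes E (size nodes) v & last v p == x].

(* [0] if [x] is not reachable from [v], and [k.+1] if [k] is the maximal number of
   hybrid nodes on a path from [v] to [x]. *)
Definition hybmax (v x : V) : nat := foldr maxn 0 (hyb_counts v x).

Definition hyb_profile (v : V) (s : nat) : seq nat :=
  [seq hybmax v x | x <- nodes & leaf_labelled s x].

Lemma hyb_countsP v x k :
  reflect (exists p, [/\ path E v p, last v p = x & (count (@hybrid N) (v :: p)).+1 = k])
          (k \in hyb_counts v x).
Proof.
apply: (iffP mapP) => [[p]|[p [pp px <-]]].
  rewrite mem_filter mem_paths // => /andP [/eqP px /andP [pp _]] ->.
  by exists p; rewrite (eq_count hybridbE).
exists p; last by rewrite (eq_count hybridbE).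
rewrite mem_filter px eqxx mem_paths // pp -(card_nodes nodesP).
exact: ltnW (path_size_lt pp).
Qed.

Lemma maxhybP v s n : maxhyb v s n <-> n.+1 \in hyb_profile v s.
Proof.
split.
- move=> [x [lx ls [p [pp px cp]] Hmax]].
  have top : n.+1 \in hyb_counts v x by apply/hyb_countsP; exists p; rewrite cp.
  have ub k : k \in hyb_counts v x -> k <= n.+1.
    by case/hyb_countsP => q [qq qx <-]; exact: Hmax.
  have max_ge : n.+1 <= hybmax v x := foldr_maxn_ub top.
  apply/mapP; exists x; first by rewrite mem_filter /leaf_labelled leafbE lx ls eqxx mem_nodes.
  by apply/eqP; rewrite eqn_leq max_ge ub // foldr_maxn_mem // (leq_trans _ max_ge).
- case/mapP => x; rewrite mem_filter /leaf_labelled leafbE.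
  case/andP => /andP [lx /eqP ls] _ hx.
  have /hyb_countsP [p [pp px [cp]]] : n.+1 \in hyb_counts v x.
    by rewrite hx foldr_maxn_mem // -/(hybmax v x) -hx.
  exists x; split => //; first by exists p.
  move=> q qq qx; rewrite -ltnS hx; apply: foldr_maxn_ub.
  by apply/hyb_countsP; exists q.
Qed.

Definition acyclicb : bool :=
  all (fun u => all (fun v => E u v ==> (u \notin reach E v)) nodes) nodes.

Lemma acyclicP : reflect (acyclic N) acyclicb.
Proof.
apply: (iffP allP) => [Hac u v uv|Hac u _].
  move/allP/(_ v (mem_nodes v))/implyP: (Hac u (mem_nodes u)).
  by move=> /(_ uv); rewrite mem_reach.
by apply/allP => v _; apply/implyP => /Hac; rewrite mem_reach.
Qed.

Definition rooted_dagb : bool := acyclicb && has is_rootb nodes.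

Lemma rooted_dagP : reflect (rooted_dag N) rooted_dagb.
Proof.
apply: (iffP andP) => [[/acyclicP Ac /hasP [r _ Rr]]|[/acyclicP Ac [r Rr]]]; split => //.
  by exists r; rewrite -is_rootbE.
by apply/hasP; exists r; rewrite ?mem_nodes ?is_rootbE.
Qed.

Definition labeled_in_Sb : bool :=
  [&& all (fun x => all (fun y => [&& leafb x, leafb y & lab x == lab y] ==> (x == y))
                         nodes) nodes,
      all (fun x => leafb x ==> (lab x \in labels)) nodes &
      all (fun s => has (leaf_labelled s) nodes) labels].

Lemma labeled_in_SP : reflect (labeled_in_S N) labeled_in_Sb.
Proof.
apply: (iffP and3P) => [[/allP inj /allP lab_in /allP cover]|[inj lab_in cover]]; split.
- move=> x y lx ly lxy; move/allP/(_ y (mem_nodes y))/implyP: (inj x (mem_nodes x)).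
  by rewrite !leafbE lx ly lxy eqxx => /(_ isT) /eqP.
- move=> x lx; apply/inS_labels.
  by move/implyP: (lab_in x (mem_nodes x)); rewrite leafbE; apply.
- move=> s /inS_labels /cover /hasP [x _ /andP [lx /eqP ls]].
  by exists x; rewrite -leafbE.
- apply/allP => x _; apply/allP => y _; apply/implyP; rewrite !leafbE.
  by case/and3P => lx ly /eqP lxy; apply/eqP; exact: inj.
- by apply/allP => x _; apply/implyP; rewrite leafbE => /lab_in /inS_labels.
- apply/allP => s /inS_labels /cover [x [lx ls]].
  by apply/hasP; exists x; rewrite ?mem_nodes // /leaf_labelled leafbE lx ls eqxx.
Qed.

Definition tree_childb : bool :=
  [&& rooted_dagb, labeled_in_Sb,
      all (fun v => ~~ leafb v ==> has (fun w => E v w && tree_nodeb w) nodes) nodes,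
      all (fun v => tree_nodeb v ==> (outdegb v != 1)) nodes &
      all (fun v => hybridb v ==> (outdegb v == 1)) nodes].

Lemma tree_childP : reflect (tree_child_network N) tree_childb.
Proof.
apply: (iffP and5P) => [[/rooted_dagP D /labeled_in_SP L /allP TC /allP T1 /allP H1]|
                        [/rooted_dagP D /labeled_in_SP L TC T1 H1]]; split => //.
- move=> v; move/implyP: (TC v (mem_nodes v)); rewrite leafbE => TCv /TCv.
  by case/hasP => w _ /andP [vw tw]; exists w; rewrite -tree_nodebE.
- by move=> v; move/implyP: (T1 v (mem_nodes v)); rewrite tree_nodebE outdegbE.
- move=> v; move/implyP: (H1 v (mem_nodes v)).
  by rewrite hybridbE outdegbE => H1v /H1v /eqP.
- apply/allP => v _; apply/implyP; rewrite leafbE => /TC [w [vw tw]].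
  by apply/hasP; exists w; rewrite ?mem_nodes // vw tree_nodebE.
- by apply/allP => v _; apply/implyP; rewrite tree_nodebE outdegbE; exact: T1.
- by apply/allP => v _; apply/implyP; rewrite hybridbE outdegbE => /H1 ->.
Qed.

Definition leaf_depth (k s : nat) : Prop :=
  exists (r : V) (p : seq V),
    [/\ indeg r = 0, path E r p, size p = k, leaf (last r p) & lab (last r p) = s].

Definition leaf_depthb (k s : nat) : bool :=
  has (fun r => (indegb r == 0) &&
         has (fun p => (size p == k) && leaf_labelled s (last r p)) (paths nodes E k r))
      nodes.

Lemma leaf_depthP k s : reflect (leaf_depth k s) (leaf_depthb k s).
Proof.
apply: (iffP hasP) => [[r _ /andP [/eqP r0 /hasP [p]]]|[r [p [r0 pp pk lp ls]]]].
  rewrite mem_paths // => /andP [pp _] /and3P [/eqP pk lp /eqP ls].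
  by exists r, p; rewrite -indegbE -leafbE.
exists r; rewrite ?mem_nodes // indegbE r0 eqxx; apply/hasP; exists p.
  by rewrite mem_paths // pp pk leqnn.
by rewrite /leaf_labelled leafbE lp ls pk !eqxx.
Qed.

Hypothesis Nlabels : forall x : V, leaf x -> inS (lab x).

Lemma leaf_labelled_labels s x : leaf_labelled s x -> s \in labels.
Proof. by case/andP => lx /eqP <-; apply/inS_labels/Nlabels; rewrite -leafbE. Qed.

Lemma Cb_labels u s : Cb u s -> s \in labels.
Proof. by case/hasP => x _ /leaf_labelled_labels. Qed.

Lemma Ab_labels u s : Ab u s -> s \in labels.
Proof. by case/andP => /hasP [x _ /leaf_labelled_labels]. Qed.

Lemma Bb_labels u s : Bb u s -> s \in labels.
Proof. by case/andP => /Cb_labels. Qed.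

Definition cluster (u : V) : seq bool := [seq Cb u s | s <- labels].

Definition theta_sig (v : V) : seq bool * seq bool * seq bool :=
  ([seq Ab v s | s <- labels], [seq Bb v s | s <- labels], cluster v).

Definition thetaAB_sig (v : V) :=
  (theta_sig v, [seq hyb_profile v s | s <- labels]).

Definition rs_sig (v : V) : seq (seq bool) := [seq cluster u | u <- nodes & E u v].

Definition Psi_sig (v : V) :=
  if tree_nodeb v then inl (thetaAB_sig v) else inr (theta_sig v, rs_sig v).

Definition arc_heads : seq V := [seq v <- nodes | has (E^~ v) nodes].

Lemma arc_headsP v : reflect (exists u, E u v) (v \in arc_heads).
Proof.
rewrite mem_filter mem_nodes andbT.
by apply: (iffP hasP) => [[u _ uv]|[u uv]]; exists u; rewrite ?mem_nodes.
Qed.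

Definition hybrids : seq V := [seq v <- nodes | hybridb v].

Lemma mem_hybrids v : (v \in hybrids) = hybrid v.
Proof. by rewrite mem_filter mem_nodes andbT hybridbE. Qed.

End Decide.

Lemma same_set_on_labels (P Q : nat -> Prop) (p q : pred nat) :
  (forall s, P s <-> p s) -> (forall s, Q s <-> q s) ->
  (forall s, p s -> s \in labels) -> (forall s, q s -> s \in labels) ->
  [seq p s | s <- labels] = [seq q s | s <- labels] -> same_set P Q.
Proof.
move=> Pp Qq pl ql /eq_in_map pq s.
case: (boolP (s \in labels)) => [/pq ps|sl].
  by split => [/Pp|/Qq]; [rewrite ps => /Qq | rewrite -ps => /Pp].
by split => [/Pp/pl|/Qq/ql]; rewrite (negbTE sl).
Qed.

Definition same_elems (T : eqType) (s t : seq T) : bool := all (mem t) s && all (mem s) t.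

Lemma same_elemsP (T : eqType) (s t : seq T) : reflect (s =i t) (same_elems s t).
Proof.
apply: (iffP andP) => [[/allP st /allP ts] x|st].
  by apply/idP/idP => [/st|/ts].
by split; apply/allP => x; rewrite /= st.
Qed.

Definition matches (A B : Type) (r : A -> B -> bool) (s : seq A) (t : seq B) : bool :=
  all (fun a => has (r a) t) s.

Lemma matches_map (X Y : eqType) (A B : Type) (r : A -> B -> bool) (f : X -> A)
    (g : Y -> B) s t x :
  matches r (map f s) (map g t) -> x \in s -> exists2 y, y \in t & r (f x) (g y).
Proof.
rewrite /matches all_map => /allP m /m /=; rewrite has_map => /hasP [y yt rxy].
by exists y.
Qed.

Lemma arcs_match N1 N2 (nodes1 : seq (nV N1)) (nodes2 : seq (nV N2))
    (P : nV N1 -> nV N2 -> Prop) (A B : Type) (r : A -> B -> bool) f g :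
  Finite.axiom nodes1 -> Finite.axiom nodes2 ->
  (forall v1 v2, r (f v1) (g v2) -> P v1 v2) ->
  matches r (map f (arc_heads nodes1)) (map g (arc_heads nodes2)) ->
  forall u1 v1, Defs.arc u1 v1 -> exists u2 v2, Defs.arc u2 v2 /\ P v1 v2.
Proof.
move=> nodesP1 nodesP2 rP m u1 v1 uv1.
have /(matches_map m) [v2 /(arc_headsP nodesP2) [u2 uv2] /rP v1v2] : v1 \in arc_heads nodes1.
  by apply/(arc_headsP nodesP1); exists u1.
by exists u2, v2.
Qed.

Definition Psi_match (A B C : eqType) (x y : A + B * seq C) : bool :=
  match x, y with
  | inl a, inl b => a == b
  | inr (t1, r1), inr (t2, r2) => (t1 == t2) && same_elems r1 r2
  | _, _ => false
  end.

Section Compare.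
Variables (N1 N2 : net) (nodes1 : seq (nV N1)) (nodes2 : seq (nV N2)).
Hypotheses (nodesP1 : Finite.axiom nodes1) (nodesP2 : Finite.axiom nodes2).
Hypotheses (tc1 : tree_child_network N1) (tc2 : tree_child_network N2).

Let ac1 : acyclic N1. Proof. by case: tc1 => [[]]. Qed.
Let ac2 : acyclic N2. Proof. by case: tc2 => [[]]. Qed.
Let lab1 : forall x : nV N1, leaf x -> inS (lab x). Proof. by case: tc1 => _ []. Qed.
Let lab2 : forall x : nV N2, leaf x -> inS (lab x). Proof. by case: tc2 => _ []. Qed.

Lemma theta_eq_of_sig v1 v2 : theta_sig nodes1 v1 = theta_sig nodes2 v2 -> theta_eq v1 v2.
Proof.
rewrite /theta_sig => /pair_equal_spec [/pair_equal_spec [sA sB] sC]; split.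
- apply: (same_set_on_labels (AsetP nodesP1 v1) (AsetP nodesP2 v2) _ _ sA) => s.
    exact: (Ab_labels nodesP1 lab1).
  exact: (Ab_labels nodesP2 lab2).
- apply: (same_set_on_labels (BsetP nodesP1 v1) (BsetP nodesP2 v2) _ _ sB) => s.
    exact: (Bb_labels nodesP1 lab1).
  exact: (Bb_labels nodesP2 lab2).
- move/eq_in_map: sC => sC s.
  have sCco : (s \in labels) && ~~ Cb nodes1 v1 s = (s \in labels) && ~~ Cb nodes2 v2 s.
    by case: (boolP (s \in labels)) => //= /sC ->.
  by split => [/(CcoP nodesP1)|/(CcoP nodesP2)];
    [rewrite sCco => /(CcoP nodesP2) | rewrite -sCco => /(CcoP nodesP1)].
Qed.

Lemma thetaAB_eq_of_sig v1 v2 :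
  thetaAB_sig nodes1 v1 = thetaAB_sig nodes2 v2 -> thetaAB_eq v1 v2.
Proof.
rewrite /thetaAB_sig => /pair_equal_spec [/theta_eq_of_sig th /eq_in_map hw].
split => // s AB n.
have sl : s \in labels.
  case: AB => [/(AsetP nodesP1)|/(BsetP nodesP1)]; first exact: (Ab_labels nodesP1 lab1).
  exact: (Bb_labels nodesP1 lab1).
by split => [/(maxhybP nodesP1 ac1)|/(maxhybP nodesP2 ac2)];
  [rewrite hw // => /(maxhybP nodesP2 ac2) | rewrite -hw // => /(maxhybP nodesP1 ac1)].
Qed.

Lemma RS_eq_of_sig v1 v2 : rs_sig nodes1 v1 =i rs_sig nodes2 v2 -> RS_eq v1 v2.
Proof.
have same_cluster (u1 : nV N1) (u2 : nV N2) :
    cluster nodes1 u1 = cluster nodes2 u2 -> same_set (Cset u1) (Cset u2).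
  apply: (same_set_on_labels (CsetP nodesP1 u1) (CsetP nodesP2 u2)).
    exact: (Cb_labels nodesP1 lab1).
  exact: (Cb_labels nodesP2 lab2).
move=> rs; split.
- move=> u1 u1v1; have : cluster nodes1 u1 \in rs_sig nodes2 v2.
    by rewrite -rs map_f // mem_filter u1v1 (mem_nodes nodesP1).
  case/mapP => u2; rewrite mem_filter => /andP [u2v2 _] /same_cluster; by exists u2.
- move=> u2 u2v2; have : cluster nodes2 u2 \in rs_sig nodes1 v1.
    by rewrite rs map_f // mem_filter u2v2 (mem_nodes nodesP2).
  case/mapP => u1; rewrite mem_filter => /andP [u1v1 _] /esym /same_cluster; by exists u1.
Qed.

Lemma Psi_eq_of_sig v1 v2 :
  Psi_match (Psi_sig nodes1 v1) (Psi_sig nodes2 v2) -> Psi_eq v1 v2.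
Proof.
rewrite /Psi_sig; case t1: (tree_nodeb nodes1 v1); case t2: (tree_nodeb nodes2 v2) => //=.
  move/eqP/thetaAB_eq_of_sig => th; left.
  by rewrite -(tree_nodebE nodesP1) -(tree_nodebE nodesP2) t1 t2.
case/andP => /eqP/theta_eq_of_sig th /same_elemsP/RS_eq_of_sig rs; right.
by rewrite -(hybridbE nodesP1) -(hybridbE nodesP2) !hybridbN t1 t2.
Qed.

Lemma RS_net_eq_of_sig :
  matches (@same_elems _) (map (rs_sig nodes1) (hybrids nodes1))
                          (map (rs_sig nodes2) (hybrids nodes2)) ->
  matches (@same_elems _) (map (rs_sig nodes2) (hybrids nodes2))
                          (map (rs_sig nodes1) (hybrids nodes1)) ->
  RS_net_eq N1 N2.
Proof.
move=> m12 m21; split.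
- move=> v1; rewrite -(mem_hybrids nodesP1) => /(matches_map m12) [v2].
  by rewrite (mem_hybrids nodesP2) => h2 /same_elemsP /RS_eq_of_sig; exists v2.
- move=> v2; rewrite -(mem_hybrids nodesP2) => /(matches_map m21) [v1].
  rewrite (mem_hybrids nodesP1) => h1 /same_elemsP rs.
  by exists v1; split => //; apply: RS_eq_of_sig => x; rewrite rs.
Qed.

End Compare.

Lemma thetaAB_net_eq_of_sig N1 N2 (nodes1 : seq (nV N1)) (nodes2 : seq (nV N2)) :
  Finite.axiom nodes1 -> Finite.axiom nodes2 ->
  tree_child_network N1 -> tree_child_network N2 ->
  matches eq_op (map (thetaAB_sig nodes1) (arc_heads nodes1))
                (map (thetaAB_sig nodes2) (arc_heads nodes2)) ->
  matches eq_op (map (thetaAB_sig nodes2) (arc_heads nodes2))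
                (map (thetaAB_sig nodes1) (arc_heads nodes1)) ->
  thetaAB_net_eq N1 N2.
Proof.
move=> P1 P2 tc1 tc2 m12 m21; split; [move: m12 | move: m21]; apply: arcs_match => // v w /eqP.
  exact: (thetaAB_eq_of_sig P1 P2 tc1 tc2).
exact: (thetaAB_eq_of_sig P2 P1 tc2 tc1).
Qed.

Lemma Psi_net_eq_of_sig N1 N2 (nodes1 : seq (nV N1)) (nodes2 : seq (nV N2)) :
  Finite.axiom nodes1 -> Finite.axiom nodes2 ->
  tree_child_network N1 -> tree_child_network N2 ->
  matches (@Psi_match _ _ _) (map (Psi_sig nodes1) (arc_heads nodes1))
                             (map (Psi_sig nodes2) (arc_heads nodes2)) ->
  matches (@Psi_match _ _ _) (map (Psi_sig nodes2) (arc_heads nodes2))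
                             (map (Psi_sig nodes1) (arc_heads nodes1)) ->
  Psi_net_eq N1 N2.
Proof.
move=> P1 P2 tc1 tc2 m12 m21; split; [move: m12 | move: m21]; apply: arcs_match => // v w.
  exact: (Psi_eq_of_sig P1 P2 tc1 tc2).
exact: (Psi_eq_of_sig P2 P1 tc2 tc1).
Qed.

(** * An isomorphism invariant *)

Section Isomorphism.
Variables (N1 N2 : net) (f : nV N1 -> nV N2).
Hypotheses (f_bij : bijective f) (f_arc : forall u w, Defs.arc (f u) (f w) = Defs.arc u w).
Hypothesis f_lab : forall x, leaf x -> lab (f x) = lab x.

Lemma indeg_iso v : indeg (f v) = indeg v.
Proof.
rewrite /indeg -(card_imset _ (bij_inj f_bij)); apply: eq_card => u.
by case: f_bij => g _ fK; rewrite -[u]fK mem_imset ?inE ?f_arc //; exact: bij_inj.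
Qed.

Lemma leaf_iso x : leaf (f x) = leaf x.
Proof.
rewrite /leaf /outdeg -(card_imset _ (bij_inj f_bij)); congr (_ == 0); apply: eq_card => w.
by case: f_bij => g _ fK; rewrite -[w]fK mem_imset ?inE ?f_arc //; exact: bij_inj.
Qed.

Lemma leaf_depth_iso k s : leaf_depth N1 k s -> leaf_depth N2 k s.
Proof.
case=> r [p [r0 pp pk lp ls]]; exists (f r), (map f p).
by rewrite indeg_iso path_map (eq_path f_arc) size_map last_map leaf_iso f_lab.
Qed.

End Isomorphism.

Lemma not_isomorphic_leaf_depth N1 N2 k s :
  leaf_depth N1 k s -> ~ leaf_depth N2 k s -> ~ isomorphic N1 N2.
Proof. by move=> d1 nd2 [f [fb fa fl]]; apply/nd2/(leaf_depth_iso fb fa fl). Qed.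

(** * The two networks *)

(* Node [i] has children [nth [::] children i]; nodes [0..4] are the leaves, node [i]
   carrying the label [i.+1]. *)
Definition net_of_children (children : seq (seq nat)) : net :=
  @Net 'I_15 (fun u v : 'I_15 => val v \in nth [::] children u) (fun v : 'I_15 => (val v).+1).

Definition children11 : seq (seq nat) :=
  [:: [::]; [::]; [::]; [::]; [::]; [:: 4; 10]; [:: 9; 14]; [:: 12; 13];
      [:: 5; 7]; [:: 3; 10]; [:: 11]; [:: 0; 12]; [:: 1]; [:: 6; 14]; [:: 2]].

Definition N11 : net := net_of_children children11.

Definition children12 : seq (seq nat) :=
  [:: [::]; [::]; [::]; [::]; [::]; [:: 0; 10]; [:: 4; 12]; [:: 9; 14];
      [:: 6; 7]; [:: 10; 13]; [:: 1]; [:: 3; 12]; [:: 5]; [:: 11; 14]; [:: 2]].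

Definition N12 : net := net_of_children children12.

Lemma nodes11P : Finite.axiom (ord_seq 15 : seq (nV N11)). Proof. exact: ord_seqP. Qed.
Lemma nodes12P : Finite.axiom (ord_seq 15 : seq (nV N12)). Proof. exact: ord_seqP. Qed.

Lemma N11_tree_child : tree_child_network N11.
Proof. by apply: (elimT (tree_childP nodes11P)); vm_compute. Qed.

Lemma N12_tree_child : tree_child_network N12.
Proof. by apply: (elimT (tree_childP nodes12P)); vm_compute. Qed.

Theorem mainTheorem5 :
  exists N11 N12 : net,
    [/\ tree_child_network N11 /\ tree_child_network N12,
        ~ isomorphic N11 N12,
        thetaAB_net_eq N11 N12,
        Psi_net_eq N11 N12 &
        RS_net_eq N11 N12].
Proof.
have tc11 := N11_tree_child; have tc12 := N12_tree_child.
exists N11, N12; split => //.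
- (* the path 8 -> 7 -> 12 -> 1 of N11; in N12 the leaf labelled 2 is at depth 4 *)
  apply: (@not_isomorphic_leaf_depth _ _ 3 2).
    by apply: (elimT (leaf_depthP nodes11P 3 2)); vm_compute.
  by apply: (elimN (leaf_depthP nodes12P 3 2)); vm_compute.
- by apply: (thetaAB_net_eq_of_sig nodes11P nodes12P tc11 tc12); vm_compute.
- by apply: (Psi_net_eq_of_sig nodes11P nodes12P tc11 tc12); vm_compute.
- by apply: (RS_net_eq_of_sig nodes11P nodes12P tc11 tc12); vm_compute.
Qed.
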